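(* Let $(\mathcal{S},d,\mathcal{C})$ be a complete uniformly convex hyperbolic space with a monotone modulus of uniform convexity $\eta$, let $\mathcal{A}\neq\emptyset$ be a closed convex subset of $\mathcal{S}$, and let $T:\mathcal{A}\to\mathcal{A}$ be a mean nonexpansive mapping with constants $a,b\ge0$, $a+b\le1$, $b<1$, such that $\mathcal{F}(T)\neq\emptyset$. Let $\{\alpha_n\}\subset[0,1]$, $\{r_n\}\subset[0,\infty)$, $x_0\in\mathcal{A}$, and let $\{x_n\}$ be generated by $$\omega_n=\mathcal{C}\Big(x_n,\,Tx_n,\,\tfrac{1}{r_n+1}\Big),\qquad x_{n+1}=\mathcal{C}\big(x_n,\,T\omega_n,\,\alpha_n\big),\qquad n\ge0.$$ Then $\{x_n\}$ converges (in the metric $d$) to a fixed point of $T$ if and only if $\liminf_{n\to\infty}d(x_n,\mathcal{F}(T))=0$, where $d(x,\mathcal{F}(T))=\inf\{d(x,z^* ):z^*\in\mathcal{F}(T)\}$.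
   Context: A hyperbolic space $(\mathcal{S},d,\mathcal{C})$ is a metric space $(\mathcal{S},d)$ with a map $\mathcal{C}:\mathcal{S}\times\mathcal{S}\times[0,1]\to\mathcal{S}$ such that for all $x,y,z,w,v\in\mathcal{S}$ and $\lambda,\mu\in[0,1]$: (i) $d(v,\mathcal{C}(x,y,\lambda))\le(1-\lambda)d(v,x)+\lambda d(v,y)$; (ii) $d(\mathcal{C}(x,y,\lambda),\mathcal{C}(x,y,\mu))=|\lambda-\mu|\,d(x,y)$; (iii) $\mathcal{C}(x,y,\lambda)=\mathcal{C}(y,x,1-\lambda)$; (iv) $d(\mathcal{C}(x,z,\lambda),\mathcal{C}(y,w,\lambda))\le(1-\lambda)d(x,y)+\lambda d(z,w)$. (In a normed space, $\mathcal{C}(x,y,\lambda)=(1-\lambda)x+\lambda y$.) A subset $\mathcal{A}$ is convex if $\mathcal{C}(x,y,\lambda)\in\mathcal{A}$ for all $x,y\in\mathcal{A}$, $\lambda\in[0,1]$. The space is uniformly convex if for every $r>0$ and $\epsilon\in(0,2]$ there is $\delta\in(0,1]$ such that for all $x,y,z\in\mathcal{S}$ with $d(x,z)\le r$, $d(y,z)\le r$, $d(x,y)\ge\epsilon r$ one has $d(\mathcal{C}(x,y,\tfrac12),z)\le(1-\delta)r$; a map $\eta:(0,\infty)\times(0,2]\to(0,1]$ giving such a $\delta=\eta(r,\epsilon)$ is a modulus of uniform convexity, and it is monotone if it is nonincreasing in $r$ for each fixed $\epsilon$. A mapping $T:\mathcal{A}\to\mathcal{A}$ is mean nonexpansive if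 there are constants $a,b\ge0$ with $a+b\le1$ such that $d(Tx,Ty)\le a\,d(x,y)+b\,d(x,Ty)$ for all $x,y\in\mathcal{A}$; $\mathcal{F}(T)$ denotes its set of fixed points. *)

From mathcomp Require Import all_boot all_order all_algebra.
From mathcomp Require Import all_classical all_reals all_analysis.
Set Implicit Arguments. Unset Strict Implicit. Unset Printing Implicit Defensive.
Import Order.TTheory GRing.Theory Num.Theory.
Local Open Scope classical_set_scope.
Local Open Scope ring_scope.

Section Defs.
Variables (R : realType) (S : Type).
Implicit Types (d : S -> S -> R).

Definition is_metric d : Prop :=
  (forall x y, d x y = 0 <-> x = y) /\
  (forall x y, d x y = d y x) /\
  (forall x y z, d x z <= d x y + d y z).

Definition mconv d (u : nat -> S) (p : S) : Prop :=
  forall e : R, 0 < e -> exists N : nat, forall n, (N <= n)%N -> d (u n) p < e.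

Definition mcauchy d (u : nat -> S) : Prop :=
  forall e : R, 0 < e -> exists N : nat, forall m n, (N <= m)%N -> (N <= n)%N ->
    d (u m) (u n) < e.

Definition mcomplete d : Prop :=
  forall u : nat -> S, mcauchy d u -> exists p, mconv d u p.

Definition hyperbolic d (C : S -> S -> R -> S) : Prop :=
  is_metric d /\
  (forall x y v lam, 0 <= lam <= 1 ->
     d v (C x y lam) <= (1 - lam) * d v x + lam * d v y) /\
  (forall x y lam mu, 0 <= lam <= 1 -> 0 <= mu <= 1 ->
     d (C x y lam) (C x y mu) = `|lam - mu| * d x y) /\
  (forall x y lam, 0 <= lam <= 1 -> C x y lam = C y x (1 - lam)) /\
  (forall x y z w lam, 0 <= lam <= 1 ->
     d (C x z lam) (C y w lam) <= (1 - lam) * d x y + lam * d z w).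

Definition modulus_uc d (C : S -> S -> R -> S) (eta : R -> R -> R) : Prop :=
  forall r eps, 0 < r -> 0 < eps <= 2 ->
    0 < eta r eps <= 1 /\
    (forall x y z, d x z <= r -> d y z <= r -> eps * r <= d x y ->
       d (C x y (2^-1)) z <= (1 - eta r eps) * r).

Definition monotone_modulus (eta : R -> R -> R) : Prop :=
  forall eps r s, 0 < eps <= 2 -> 0 < r -> r <= s -> eta s eps <= eta r eps.

Definition mclosed d (A : set S) : Prop :=
  forall (u : nat -> S) p, (forall n, A (u n)) -> mconv d u p -> A p.

Definition hconvex (C : S -> S -> R -> S) (A : set S) : Prop :=
  forall x y lam, A x -> A y -> 0 <= lam <= 1 -> A (C x y lam).

Definition mean_nonexpansive d (A : set S) (T : S -> S) (a b : R) : Prop :=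
  forall x y, A x -> A y -> d (T x) (T y) <= a * d x y + b * d x (T y).

Definition Fixpts (A : set S) (T : S -> S) : set S := [set z | A z /\ T z = z].

Definition dist_set d (x : S) (F : set S) : R := inf [set d x z | z in F].

End Defs.

(* Each step of the iteration moves toward every fixed point: T is
   quasi-nonexpansive (a mean nonexpansive map with a + b <= 1 does not increase
   the distance to a fixed point) and C(u, v, l) is no farther from p than u
   when v is not.  So the iterates are Fejér monotone with respect to F(T).
   If liminf d(x_n, F(T)) = 0, Fejér monotonicity turns one close approach into
   a tail that stays close, hence {x_n} is Cauchy; its limit q lies in A and is
   approximated by fixed points, so d(Tq, q) <= 2 d(q, p) forces Tq = q.  The
   converse is immediate from d(x_n, F(T)) <= d(x_n, p). *)
From mathcomp Require Import all_boot all_order all_algebra.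
From mathcomp Require Import lra.
From mathcomp Require Import all_classical all_reals all_analysis.
Set Implicit Arguments. Unset Strict Implicit. Unset Printing Implicit Defensive.
Import Order.TTheory GRing.Theory Num.Theory.
Local Open Scope classical_set_scope.
Local Open Scope ring_scope.

Lemma limn_einf_EFin_eq0_lt (R : realType) (f : nat -> R) (e : R) :
  limn_einf (fun n => (f n)%:E) = 0%E -> 0 < e -> exists n, f n < e.
Proof.
move=> f0 e0; apply/not_existsP => /= hf.
suff : (e%:E <= 0)%E by rewrite lee_fin; lra.
rewrite -f0 limn_einf_lim; apply: lime_ge; first exact: is_cvg_einfs.
apply: nearW => m; apply: le_ereal_inf_tmp => _ [k _ <-].
by rewrite lee_fin leNgt; apply/negP => fk; apply: (hf k).
Qed.

Section MetricSpace.
Variables (R : realType) (S : Type) (d : S -> S -> R).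
Hypothesis dP : is_metric d.

Lemma metric_ge0 u v : 0 <= d u v.
Proof.
have [d0 [dsym dtri]] := dP; have := dtri u v u.
by rewrite (dsym v u) (proj2 (d0 u u) erefl); lra.
Qed.

Definition fejer_monotone (F : set S) (u : nat -> S) : Prop :=
  forall p n, F p -> d (u n.+1) p <= d (u n) p.

Lemma fejer_monotone_le F u p m n :
  fejer_monotone F u -> F p -> (m <= n)%N -> d (u n) p <= d (u m) p.
Proof.
move=> Fu Fp /subnK <-; elim: (n - m)%N => [|k IH] //.
by rewrite addSn; exact: le_trans (Fu _ _ Fp) IH.
Qed.

Section DistSet.
Variables (F : set S) (z0 : S).
Hypothesis Fz0 : F z0.

Let dist_ne x : [set d x z | z in F] !=set0.
Proof. by exists (d x z0), z0. Qed.

Let dist_lbound x : has_lbound [set d x z | z in F].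
Proof. by exists 0 => _ [z _ <-]; exact: metric_ge0. Qed.

Lemma dist_set_ge0 x : 0 <= dist_set d x F.
Proof. by apply: lb_le_inf => // _ [z _ <-]; exact: metric_ge0. Qed.

Lemma dist_set_le x p : F p -> dist_set d x F <= d x p.
Proof. by move=> Fp; apply: ge_inf => //; exists p. Qed.

Lemma dist_set_lt x (e : R) : dist_set d x F < e -> exists2 p, F p & d x p < e.
Proof. by move/(inf_lt (dist_ne x)) => [_ [p Fp <-]]; exists p. Qed.

Lemma mconv_limn_einf_dist_set u p :
  F p -> mconv d u p -> limn_einf (fun n => (dist_set d (u n) F)%:E) = 0%E.
Proof.
move=> Fp up.
have /cvg_limn_einf_sup[-> _] // :
  (fun n => (dist_set d (u n) F)%:E) @ \oo --> 0%E.
apply: cvg_EFin; first exact: nearW.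
apply/cvgrPdist_lt => e e0; have [N HN] := up e e0.
exists N => // n /= Nn; rewrite sub0r normrN ger0_norm ?dist_set_ge0 //.
exact: le_lt_trans (dist_set_le (u n) Fp) (HN n Nn).
Qed.

Lemma limn_einf_dist_set_approx u :
  limn_einf (fun n => (dist_set d (u n) F)%:E) = 0%E ->
  forall e : R, 0 < e -> exists n p, F p /\ d (u n) p < e.
Proof.
move=> /limn_einf_EFin_eq0_lt lim0 e e0.
by have [n /dist_set_lt[p Fp dp]] := lim0 e e0; exists n, p.
Qed.

End DistSet.

Lemma fejer_monotone_cauchy F u :
  fejer_monotone F u ->
  (forall e : R, 0 < e -> exists N p, F p /\ d (u N) p < e) -> mcauchy d u.
Proof.
have [_ [dsym dtri]] := dP.
move=> Fu approx e e0; have [N [p [Fp hp]]] := approx (e / 2) ltac:(lra).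
exists N => m n Nm Nn; have := dtri (u m) p (u n); rewrite (dsym p (u n)).
have := fejer_monotone_le Fu Fp Nm; have := fejer_monotone_le Fu Fp Nn; lra.
Qed.

Lemma fejer_monotone_limit_approx F u q :
  fejer_monotone F u -> mconv d u q ->
  (forall e : R, 0 < e -> exists N p, F p /\ d (u N) p < e) ->
  forall e : R, 0 < e -> exists2 p, F p & d q p < e.
Proof.
have [_ [dsym dtri]] := dP.
move=> Fu uq approx e e0; have [N [p [Fp hp]]] := approx (e / 2) ltac:(lra).
have [M HM] := uq (e / 2) ltac:(lra); exists p => //.
have := HM _ (leq_maxr N M); have := fejer_monotone_le Fu Fp (leq_maxl N M).
have := dtri q (u (maxn N M)) p; rewrite (dsym q (u (maxn N M))); lra.
Qed.

Section QuasiNonexpansive.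
Variables (A : set S) (T : S -> S).
Hypothesis TqP : forall p y, Fixpts A T p -> A y -> d (T y) p <= d y p.

Lemma quasi_nonexpansive_fixed q :
  A q -> (forall e : R, 0 < e -> exists2 p, Fixpts A T p & d q p < e) ->
  T q = q.
Proof.
have [d0 [dsym dtri]] := dP.
move=> Aq approx; apply/d0/eqP; rewrite eq_le metric_ge0 andbT leNgt.
apply/negP => Tq0; have [p Fp hp] := approx (d (T q) q / 2) ltac:(lra).
have := dtri (T q) p q; have := TqP Fp Aq; rewrite (dsym p q); lra.
Qed.

End QuasiNonexpansive.

End MetricSpace.

Section Hyperbolic.
Variables (R : realType) (S : Type) (d : S -> S -> R) (C : S -> S -> R -> S).
Hypothesis hypP : hyperbolic d C.

Lemma hyperbolic_dist_le p u v l :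
  0 <= l <= 1 -> d v p <= d u p -> d (C u v l) p <= d u p.
Proof.
have [[_ [dsym _]] [H1 _]] := hypP.
move=> /andP[l0 l1] h; rewrite dsym.
have := H1 u v p l; rewrite l0 l1 /= => /(_ isT).
by rewrite (dsym p u) (dsym p v); nra.
Qed.

Lemma mean_nonexpansive_quasi A T a b p y :
  0 <= a -> a + b <= 1 -> mean_nonexpansive d A T a b ->
  Fixpts A T p -> A y -> d (T y) p <= d y p.
Proof.
move=> a0 ab1 Tme [Ap Tp] Ay; have := Tme y p Ay Ap; rewrite Tp.
have := metric_ge0 hypP.1 y p; nra.
Qed.

Section Iteration.
Variables (A : set S) (T : S -> S) (alpha r : nat -> R) (x w : nat -> S).
Hypotheses (Acv : hconvex C A) (AT : forall y, A y -> A (T y)).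
Hypotheses (alphaP : forall n, 0 <= alpha n <= 1) (r0 : forall n, 0 <= r n).
Hypotheses (Ax0 : A (x 0%N))
  (wE : forall n, w n = C (x n) (T (x n)) (1 / (r n + 1)))
  (xS : forall n, x n.+1 = C (x n) (T (w n)) (alpha n)).

Let weight_ge0_le1 n : 0 <= 1 / (r n + 1) <= 1.
Proof.
have rn := r0 n; apply/andP; split; first by apply: divr_ge0; lra.
by rewrite ler_pdivrMr ?mul1r; lra.
Qed.

Lemma iterates_in n : A (x n) /\ A (w n).
Proof.
have Aw m : A (x m) -> A (w m) by move=> Axm; rewrite wE; apply: Acv; auto.
elim: n => [|n [Axn Awn]]; first by split; auto.
have Axn1 : A (x n.+1) by rewrite xS; apply: Acv; auto.
by split; auto.
Qed.

Lemma iterates_fejer_monotone :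
  (forall p y, Fixpts A T p -> A y -> d (T y) p <= d y p) ->
  fejer_monotone d (Fixpts A T) x.
Proof.
move=> TqP p n Fp; have [Axn Awn] := iterates_in n.
have hw : d (w n) p <= d (x n) p.
  by rewrite wE; apply: hyperbolic_dist_le => //; exact: TqP.
rewrite xS; apply: hyperbolic_dist_le => //.
exact: le_trans (TqP _ _ Fp Awn) hw.
Qed.

End Iteration.

End Hyperbolic.

Theorem theorem4 (R : realType) (S : Type) (d : S -> S -> R)
  (C : S -> S -> R -> S) (eta : R -> R -> R)
  (A : set S) (T : S -> S) (a b : R)
  (alpha r : nat -> R) (x0 : S) (x w : nat -> S) :
  hyperbolic d C -> mcomplete d ->
  modulus_uc d C eta -> monotone_modulus eta ->
  (exists z, A z) -> mclosed d A -> hconvex C A ->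
  (forall y, A y -> A (T y)) ->
  0 <= a -> 0 <= b -> a + b <= 1 -> b < 1 ->
  mean_nonexpansive d A T a b ->
  (exists z, Fixpts A T z) ->
  (forall n, 0 <= alpha n <= 1) -> (forall n, 0 <= r n) ->
  A x0 -> x 0%N = x0 ->
  (forall n, w n = C (x n) (T (x n)) (1 / (r n + 1))) ->
  (forall n, x n.+1 = C (x n) (T (w n)) (alpha n)) ->
  ((exists p, Fixpts A T p /\ mconv d x p) <->
   limn_einf (fun n => (dist_set d (x n) (Fixpts A T))%:E) = 0%E).
Proof.
move=> hypP dcompl _ _ _ Acl Acv AT a0 _ ab1 _ Tme [z0 Fz0] alphaP r0 Ax0 x0E
  wE xS.
have dP := hypP.1; rewrite -x0E in Ax0.
have TqP := mean_nonexpansive_quasi hypP a0 ab1 Tme.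
have Fx := iterates_fejer_monotone hypP Acv AT alphaP r0 Ax0 wE xS TqP.
split=> [[p [Fp xp]]|lim0].
  exact: (mconv_limn_einf_dist_set dP Fz0 Fp xp).
have approx := limn_einf_dist_set_approx Fz0 lim0.
have [q xq] := dcompl _ (fejer_monotone_cauchy dP Fx approx).
have Aq : A q.
  by apply: (Acl x) => // n; case: (iterates_in Acv AT alphaP r0 Ax0 wE xS n).
exists q; split=> //; split=> //.
have approxq := fejer_monotone_limit_approx dP Fx xq approx.
exact: (quasi_nonexpansive_fixed dP TqP Aq approxq).
Qed.
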